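(* For every positive integer $t$ there exists an integer $N_t$ such that the following holds. Let $G$ be a finite group (not necessarily abelian, written additively) such that the smallest prime divisor $p$ of $|G|$ satisfies $p>t$. Let $M=[a_1^{\lambda_1},\dots,a_n^{\lambda_n}]$ be a multiset of non-identity elements of $G$, where $a_1,\dots,a_n$ are distinct, $\lambda_i\ge1$, and $n\ge N_t$. Then $M$ is $t$-weakly sequenceable.
   Context: $[a_1^{\lambda_1},\dots,a_n^{\lambda_n}]$ denotes the multiset containing $a_i$ with multiplicity $\lambda_i$; its underlying set is $\{a_1,\dots,a_n\}$. A multiset $M$ of size $m$ is $t$-weakly sequenceable if there is a sequence $(y_1,\dots,y_m)$ in which each element of $M$ appears exactly as many times as its multiplicity, such that the partial sums $s_0=0$, $s_i=y_1+\dots+y_i$ (summed left to right) satisfy $s_i\ne s_j$ whenever $0\le i<j\le m$ and $j-i\le t$. *)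

(* The group is written multiplicatively (MathComp's finGroupType);
   the paper's additive notation "+" is our "*", and 0 is our 1. *)
From mathcomp Require Import all_boot all_fingroup.
Set Implicit Arguments. Unset Strict Implicit. Unset Printing Implicit Defensive.
Local Open Scope group_scope.

Definition mset_of (gT : finGroupType) (a : seq gT) (lam : seq nat) : seq gT :=
  flatten [seq nseq l.2 l.1 | l <- zip a lam].

Definition psum (gT : finGroupType) (y : seq gT) (i : nat) : gT :=
  \prod_(x <- take i y) x.

Definition t_weakly_sequenceable (gT : finGroupType) (t : nat) (M : seq gT) : Prop :=
  exists y : seq gT, perm_eq y M /\
    forall i j : nat, (i < j)%N -> (j <= size y)%N -> (j - i <= t)%N ->
      psum y i != psum y j.

From mathcomp Require Import all_boot all_fingroup cyclic zify.
Set Implicit Arguments. Unset Strict Implicit. Unset Printing Implicit Defensive.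
Local Open Scope group_scope.

(* Partial sums at distance at most t are distinct exactly when every window (block of 1 to t
   consecutive terms) has a nontrivial product, and such an arrangement is built greedily.
   First t^2 + t gaps A B with |A| = |B| = t are laid down whose junction products (a prefix
   of B times a suffix of A, both shorter than t) are pairwise disjoint; then elements are
   appended as long as all windows stay nontrivial. Each greedy step only has to avoid
   boundedly many values, which is why N_t distinct elements suffice. When the appending gets
   stuck, at most t distinct values x remain, all of order > t because every prime divisor of
   |G| exceeds t. All copies of x fit as one block between A and B unless some x^-v
   (1 <= v <= t) is a junction product of that gap; by disjointness this rules out at most t
   gaps for each x, so every leftover value gets a gap of its own. *)

Lemma size_undup_perm_cat (T : eqType) (pool s rest : seq T) :
  perm_eq pool (s ++ rest) -> size (undup pool) <= size s + size (undup rest).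
Proof.
move=> pool_s; rewrite -size_cat; apply: uniq_leq_size (undup_uniq _) _ => z.
by rewrite mem_undup (perm_mem pool_s) !mem_cat mem_undup.
Qed.

Section Greedy.
Variables (T : eqType) (P : seq T -> Prop) (forbidden : seq T -> seq T).
Hypothesis P_rcons : forall s y, P s -> y \notin forbidden s -> P (rcons s y).

Lemma greedy_extend m s pool n :
  (forall r, size (forbidden r) <= m) -> P s -> n + m <= size (undup pool) ->
  exists r rest, [/\ size r = n, P (s ++ r) & perm_eq pool (r ++ rest)].
Proof.
move=> forbidden_m Ps; elim: n => [|n IH] bound; first by exists [::], pool; rewrite cats0.
have [r [rest [size_r Psr pool_r]]] := IH (ltnW bound).
have [y rest_y y_ok] : exists2 y, y \in rest & y \notin forbidden (s ++ r).
  apply/hasP; apply: contraTT bound => /hasPn rest_forbidden; rewrite -ltnNge.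
  have rest_m : size (undup rest) <= m.
    apply: leq_trans (forbidden_m (s ++ r)).
    apply: uniq_leq_size (undup_uniq _) _ => z; rewrite mem_undup => /rest_forbidden.
    by rewrite negbK.
  by have := size_undup_perm_cat pool_r; lia.
exists (rcons r y), (rem y rest); split.
- by rewrite size_rcons size_r.
- by rewrite -rcons_cat; apply: P_rcons.
- by rewrite cat_rcons (perm_trans pool_r) // perm_cat2l perm_to_rem.
Qed.

Lemma greedy_exhaust s pool : P s ->
  exists r rest,
    [/\ P (s ++ r), perm_eq pool (r ++ rest) & {subset rest <= forbidden (s ++ r)}].
Proof.
have [n] := ubnP (size pool); elim: n pool s => // n IH pool s /ltnSE size_pool Ps.
have [/hasP[y pool_y y_ok] | /hasPn stuck] := boolP (has (fun y => y \notin forbidden s) pool).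
  have size_rem_y : size (rem y pool) < n.
    by rewrite size_rem //; case: (pool) pool_y size_pool.
  have [r [rest [Psr rest_r stuck_r]]] := IH _ _ size_rem_y (P_rcons Ps y_ok).
  exists (y :: r), rest; rewrite -cat_rcons; split=> //.
  by rewrite (perm_trans (perm_to_rem pool_y)) // perm_cons.
by exists [::], pool; rewrite cats0; split=> // z /stuck; rewrite negbK.
Qed.

End Greedy.

Section Assignment.
Variables (X : eqType) (Y : Type) (fits : X -> Y -> bool).

(* [Some x] in position i of [os] puts [x] into the i-th [y]; every [x] is used once. *)
Lemma greedy_assignment (ys : seq Y) (xs : seq X) :
  \sum_(x <- xs) count (fun y => ~~ fits x y) ys + size xs <= size ys ->
  exists os : seq (option X), [/\ size os = size ys, perm_eq (pmap id os) xs &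
    all2 (fun o y => oapp (fits^~ y) true o) os ys].
Proof.
elim: ys xs => [|y ys IH] xs bound.
  by move: bound; rewrite /= leqn0 addn_eq0 size_eq0 => /andP[_ /eqP->]; exists [::].
have split_sum xs' : \sum_(x <- xs') count (fun y' => ~~ fits x y') (y :: ys) =
    \sum_(x <- xs') ~~ fits x y + \sum_(x <- xs') count (fun y' => ~~ fits x y') ys.
  by rewrite -big_split.
have [/hasP[x xs_x fits_xy] | /hasPn unfit] := boolP (has (fits^~ y) xs).
  have [|os [size_os perm_os fit_os]] := IH (rem x xs).
    have sum_rem : \sum_(x' <- xs) count (fun y' => ~~ fits x' y') ys =
        count (fun y' => ~~ fits x y') ys +
        \sum_(x' <- rem x xs) count (fun y' => ~~ fits x' y') ys.
      by rewrite (perm_big _ (perm_to_rem xs_x)) big_cons.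
    have xs_gt0 : 0 < size xs by case: (xs) xs_x.
    by move: bound; rewrite split_sum sum_rem size_rem //=; lia.
  exists (Some x :: os); split=> /=; [by rewrite size_os | | by rewrite fits_xy].
  by rewrite perm_sym (perm_trans (perm_to_rem xs_x)) // perm_cons perm_sym.
have [|os [size_os perm_os fit_os]] := IH xs.
  have [/size0nil-> | xs_gt0] := posnP (size xs); first by rewrite big_nil.
  move: bound; rewrite split_sum (eq_big_seq (fun=> 1%N)) ?sum1_size /=; first lia.
  by move=> x /unfit /negbTE ->.
by exists (None :: os); split=> //=; rewrite size_os.
Qed.

End Assignment.

Lemma count_has_leq_sum (T U : Type) (p : U -> pred T) (us : seq U) (s : seq T) :
  count (fun x => has (p^~ x) us) s <= \sum_(u <- us) count (p u) s.
Proof.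
elim: us => [|u us IH] /=; first by rewrite big_nil; elim: s.
rewrite big_cons; apply: leq_trans (leq_add (leqnn _) IH).
rewrite -count_predUI (@eq_count _ _ (predU (p u) (fun x => has (p^~ x) us))) //.
exact: leq_addr.
Qed.

Lemma size_flatten_map_const (T U : Type) (f : T -> seq U) c (s : seq T) :
  all (fun x => size (f x) == c) s -> size (flatten (map f s)) = (size s * c)%N.
Proof. by elim: s => //= x s IH /andP[/eqP fx /IH]; rewrite size_cat fx mulSn => ->. Qed.

Definition lastn (T : Type) (n : nat) (s : seq T) : seq T := drop (size s - n) s.

Section LastN.
Variable T : Type.
Implicit Types s : seq T.

Lemma lastn0 s : lastn 0 s = [::].
Proof. by rewrite /lastn subn0 drop_size. Qed.

Lemma lastn_cat n s1 s2 : n <= size s2 -> lastn n (s1 ++ s2) = lastn n s2.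
Proof.
by move=> n_s2; rewrite /lastn size_cat -addnBA // addnC -drop_drop drop_size_cat.
Qed.

Lemma lastn_catr n s1 s2 : size s2 <= n ->
  lastn n (s1 ++ s2) = lastn (n - size s2) s1 ++ s2.
Proof.
move=> s2_n; rewrite /lastn drop_cat size_cat.
have -> : size s1 + size s2 - n = size s1 - (n - size s2) by lia.
case: ltnP => // s1_le; rewrite (drop_oversize s1_le).
have -> : size s1 - (n - size s2) - size s1 = 0 by lia.
by rewrite drop0.
Qed.

Lemma lastn_lastn m n s : m <= n -> lastn m (lastn n s) = lastn m s.
Proof. by move=> mn; rewrite /lastn drop_drop size_drop; congr drop; lia. Qed.

Lemma lastn_nseq n c (x : T) : n <= c -> lastn n (nseq c x) = nseq n x.
Proof. by move=> nc; rewrite /lastn drop_nseq size_nseq; congr nseq; lia. Qed.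

End LastN.

Lemma expg_neq1 (gT : finGroupType) (x : gT) v : 0 < v < #[x] -> x ^+ v != 1.
Proof.
case/andP=> v_gt0 v_lt; apply: contraTneq v_lt => xv1.
by rewrite -leqNgt dvdn_leq // order_dvdn xv1.
Qed.

Lemma mulg_rot_eq1 (gT : finGroupType) (a b c : gT) : a * b * c = 1 -> b * c * a = 1.
Proof. by move=> abc; rewrite -(conj1g a) -abc /conjg !mulgA mulVg mul1g. Qed.

Lemma pdiv_leq_order (gT : finGroupType) (G : {group gT}) x :
  x \in G -> x != 1 -> pdiv #|G| <= #[x].
Proof. by move=> xG x_ne1; apply: pdiv_min_dvd; [rewrite order_gt1 | apply: order_dvdG]. Qed.

Section Windows.
Variables (gT : finGroupType) (t : nat).
Implicit Types (s A B L M R U V : seq gT) (x y z : gT).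

Definition prodg s : gT := \prod_(x <- s) x.

Lemma prodg_nil : prodg [::] = 1. Proof. exact: big_nil. Qed.

Lemma prodg_seq1 x : prodg [:: x] = x. Proof. exact: big_seq1. Qed.

Lemma prodg_cat s1 s2 : prodg (s1 ++ s2) = prodg s1 * prodg s2.
Proof. exact: big_cat. Qed.

Lemma prodg_nseq n x : prodg (nseq n x) = x ^+ n.
Proof.
by elim: n => [|n IH]; rewrite ?prodg_nil //= -cat1s prodg_cat prodg_seq1 IH expgS.
Qed.

Definition nontrivial_windows s := forall i k, 0 < k <= t -> i + k <= size s ->
  prodg (take k (drop i s)) != 1.

Definition nontrivial_junction U V := forall k j, 0 < k <= size U -> 0 < j <= size V ->
  k + j <= t -> prodg (lastn k U) * prodg (take j V) != 1.

Lemma window_cat U V i k : i < size U < i + k ->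
  take k (drop i (U ++ V)) = lastn (size U - i) U ++ take (i + k - size U) V.
Proof.
case/andP=> iU Uik; rewrite drop_cat iU /lastn subKn; last exact: ltnW.
rewrite {1}(_ : k = size U - i + (i + k - size U)); last lia.
by rewrite takeD take_size_cat ?drop_size_cat ?size_drop.
Qed.

Lemma nontrivial_windows_cat U V : nontrivial_windows (U ++ V) <->
  [/\ nontrivial_windows U, nontrivial_windows V & nontrivial_junction U V].
Proof.
split=> [winUV | [winU winV junUV] i k kt].
  split.
  - move=> i k kt ik; have iU : i < size U by lia.
    have := winUV i k kt.
    by rewrite drop_cat iU takel_cat ?size_drop ?size_cat; [apply | ]; lia.
  - move=> i k kt ik; have := winUV (size U + i) k kt.
    by rewrite -addnA [size U + i]addnC -drop_drop drop_size_cat // size_cat; apply; lia.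
  - move=> k j /andP[k_gt0 kU] /andP[j_gt0 jV] kj.
    have := winUV (size U - k) (k + j); rewrite window_cat; last lia.
    rewrite subKn // (_ : size U - k + (k + j) - size U = j); last lia.
    by rewrite prodg_cat size_cat; apply; lia.
rewrite size_cat => ik; have [ikU | Uik] := leqP (i + k) (size U).
  have iU : i < size U by lia.
  by rewrite drop_cat iU takel_cat ?size_drop; [apply: winU | lia].
have [Ui | iU] := leqP (size U) i.
  by rewrite drop_cat ltnNge Ui /=; apply: winV => //; lia.
by rewrite window_cat ?iU ?Uik // prodg_cat; apply: junUV; lia.
Qed.

Lemma nontrivial_junction_lastn U U' V : t.-1 <= size U -> t.-1 <= size U' ->
  lastn t.-1 U = lastn t.-1 U' -> nontrivial_junction U V -> nontrivial_junction U' V.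
Proof.
move=> szU szU' eqU junUV k j /andP[k_gt0 kU'] jV kj.
have kt : k <= t.-1 by lia.
by rewrite -(lastn_lastn _ kt) -eqU lastn_lastn //; apply: junUV => //; lia.
Qed.

Lemma nontrivial_junction_take U V V' : t.-1 <= size V -> t.-1 <= size V' ->
  take t.-1 V = take t.-1 V' -> nontrivial_junction U V -> nontrivial_junction U V'.
Proof.
move=> szV szV' eqV junUV k j kU /andP[j_gt0 jV'] kj.
have jt : j <= t.-1 by lia.
by rewrite -(take_takel _ jt) -eqV take_takel //; apply: junUV => //; lia.
Qed.

(* Only the first and last t - 1 terms of a block take part in windows leaving it. *)
Lemma nontrivial_windows_replace L M M' R :
  nontrivial_windows (L ++ M ++ R) -> nontrivial_windows M' ->
  t.-1 <= size M -> t.-1 <= size M' ->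
  take t.-1 M = take t.-1 M' -> lastn t.-1 M = lastn t.-1 M' ->
  nontrivial_windows (L ++ M' ++ R).
Proof.
move=> /nontrivial_windows_cat[winL /nontrivial_windows_cat[_ winR junMR] junL].
move=> winM' szM szM' eq_take eq_lastn; apply/nontrivial_windows_cat; split=> //.
  by apply/nontrivial_windows_cat; split=> //; apply: nontrivial_junction_lastn junMR.
by apply: nontrivial_junction_take junL; rewrite ?size_cat ?takel_cat //; lia.
Qed.

Definition inv_suffix_prods s : seq gT := [seq (prodg (lastn k s))^-1 | k <- iota 0 t].

Lemma size_inv_suffix_prods s : size (inv_suffix_prods s) = t.
Proof. by rewrite size_map size_iota. Qed.

Lemma nontrivial_windows_rcons s y :
  nontrivial_windows s -> y \notin inv_suffix_prods s -> nontrivial_windows (rcons s y).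
Proof.
move=> win_s y_ok; have closer k : k < t -> y != (prodg (lastn k s))^-1.
  by move=> kt; apply: contraNneq y_ok => ->; apply: map_f; rewrite mem_iota.
rewrite -cats1; apply/nontrivial_windows_cat; split=> //.
  move=> i k /andP[k_gt0 kt] /= ik; have [-> ->] : i = 0 /\ k = 1%N by lia.
  by have := closer 0; rewrite lastn0 prodg_nil invg1 /= prodg_seq1; apply; lia.
move=> k j /andP[k_gt0 ks] /andP[j_gt0 j1] kj; have -> : j = 1%N by move: j1 => /=; lia.
by rewrite /= prodg_seq1 -eq_invg_mul eq_sym; apply: closer; lia.
Qed.

Lemma nontrivial_windows_nseq c x : t < #[x] -> nontrivial_windows (nseq c x).
Proof.
move=> ox i k /andP[k_gt0 kt]; rewrite size_nseq => ik.
by rewrite drop_nseq take_nseq ?prodg_nseq; [apply: expg_neq1 | ]; lia.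
Qed.

Local Notation gap := (seq gT * seq gT)%type.

(* A window [a * x ^+ v * b] through a block of x's inserted between A and B, with [a] a
   suffix of A and [b] a prefix of B, is trivial iff [(x ^+ v)^-1 = b * a]. *)
Definition junction (g : gap) : seq gT :=
  [seq prodg (take j g.2) * prodg (lastn k g.1) | j <- iota 0 t, k <- iota 0 t].

Lemma size_junction g : size (junction g) = (t * t)%N.
Proof. by rewrite size_allpairs size_iota. Qed.

Lemma mem_junction A B j k : j < t -> k < t ->
  prodg (take j B) * prodg (lastn k A) \in junction (A, B).
Proof.
move=> jt kt.
by apply: (allpairs_f (fun j k => prodg (take j B) * prodg (lastn k A))); rewrite mem_iota.
Qed.

Definition insertable x (g : gap) : bool :=
  all (fun v => (x ^+ v)^-1 \notin junction g) (iota 1 t).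

Lemma insertable_neq1 x A B v j k : insertable x (A, B) -> 0 < v <= t -> j < t -> k < t ->
  prodg (lastn k A) * x ^+ v * prodg (take j B) != 1.
Proof.
move=> /allP ins vt jt kt; have : (x ^+ v)^-1 \notin junction (A, B).
  by apply: ins; rewrite mem_iota; lia.
apply: contra => /eqP/mulg_rot_eq1/eqP; rewrite -mulgA -eq_invg_mul => /eqP ->.
exact: mem_junction.
Qed.

Lemma nontrivial_windows_insert c x A B :
  nontrivial_windows A -> nontrivial_windows B -> 0 < c -> t < #[x] ->
  insertable x (A, B) -> nontrivial_windows (A ++ nseq c x ++ B).
Proof.
move=> winA winB c_gt0 ox ins; rewrite catA; apply/nontrivial_windows_cat; split=> //.
  apply/nontrivial_windows_cat; split=> //; first exact: nontrivial_windows_nseq.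
  move=> k j /andP[k_gt0 kA]; rewrite size_nseq => /andP[j_gt0 jc] kj.
  have := insertable_neq1 (v := j) (j := 0) (k := k) ins.
  by rewrite take0 prodg_nil mulg1 take_nseq // prodg_nseq; apply; lia.
move=> k j /andP[k_gt0]; rewrite size_cat size_nseq => kAc /andP[j_gt0 jB] kj.
have [kc | ck] := leqP k c.
  have := insertable_neq1 (v := k) (j := j) (k := 0) ins.
  rewrite lastn0 prodg_nil mul1g lastn_cat ?lastn_nseq ?size_nseq // prodg_nseq.
  by apply; lia.
have := insertable_neq1 (v := c) (j := j) (k := k - c) ins.
by rewrite lastn_catr ?size_nseq ?prodg_cat ?prodg_nseq; [apply | ]; lia.
Qed.

Definition gaps (gs : seq gap) : seq gT := flatten [seq g.1 ++ g.2 | g <- gs].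

Lemma gaps_rcons gs g : gaps (rcons gs g) = gaps gs ++ g.1 ++ g.2.
Proof. by rewrite /gaps -cats1 map_cat flatten_cat /= cats0. Qed.

Definition filler (cnt : gT -> nat) (o : option gT) : seq gT :=
  oapp (fun x => nseq (cnt x) x) [::] o.

Definition fill_gaps cnt (os : seq (option gT)) (gs : seq gap) : seq gT :=
  flatten [seq og.2.1 ++ filler cnt og.1 ++ og.2.2 | og <- zip os gs].

Definition fits_in (cnt : gT -> nat) x (g : gap) : bool :=
  [&& 0 < cnt x, t < #[x] & insertable x g].

Lemma nontrivial_windows_fill cnt os gs Pre R :
  all2 (fun o g => oapp (fits_in cnt ^~ g) true o) os gs ->
  all (fun g => (t.-1 <= size g.1) && (t.-1 <= size g.2)) gs ->
  nontrivial_windows (Pre ++ gaps gs ++ R) ->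
  nontrivial_windows (Pre ++ fill_gaps cnt os gs ++ R).
Proof.
elim: gs os Pre => [|[A B] gs IH] [|o os] Pre //=.
move=> /andP[fit_o fit_os] /andP[/andP[szA szB] szs].
rewrite /gaps /fill_gaps /= => win; rewrite -catA catA; apply: IH => //.
rewrite -catA in win; rewrite -catA; case: o fit_o => [x /and3P[cnt_gt0 ox ins] | _] //=.
move: (win) => /nontrivial_windows_cat[_ /nontrivial_windows_cat[]].
move=> /nontrivial_windows_cat[winA winB _] _ _ _.
apply: (nontrivial_windows_replace win).
- exact: nontrivial_windows_insert.
- by rewrite size_cat; lia.
- by rewrite !size_cat; lia.
- by rewrite !takel_cat.
- by rewrite !lastn_cat // !size_cat; lia.
Qed.

Lemma perm_fill_gaps cnt os gs : size os = size gs ->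
  perm_eq (fill_gaps cnt os gs) (gaps gs ++ flatten [seq nseq (cnt x) x | x <- pmap id os]).
Proof.
elim: gs os => [|g gs IH] [|o os] //= [/IH]; rewrite /fill_gaps /gaps /= => perm_os.
apply/seq.permP => p; move/seq.permP: perm_os => /(_ p).
by case: o => [x|] /=; rewrite !count_cat; lia.
Qed.

(* Every junction contains [1] (take [j = k = 0]), hence the restriction to [z != 1]. *)
Definition disjoint_junctions (gs : seq gap) :=
  forall z, z != 1 -> (count (fun g => z \in junction g) gs <= 1)%N.

Lemma count_not_insertable x gs : t < #[x] -> disjoint_junctions gs ->
  count (fun g => ~~ insertable x g) gs <= t.
Proof.
move=> ox disj.
rewrite (eq_count (a2 := fun g => has (fun v => (x ^+ v)^-1 \in junction g) (iota 1 t))).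
  apply: leq_trans (count_has_leq_sum _ _ _) _.
  rewrite -[X in _ <= X](size_iota 1 t) -sum1_size big_seq [X in _ <= X]big_seq.
  apply: leq_sum => v; rewrite mem_iota => v_range; apply: disj.
  by rewrite invg_eq1 expg_neq1 //; lia.
by move=> g; rewrite /insertable -has_predC; apply: eq_has => v /=; rewrite negbK.
Qed.

Lemma place_leftovers gs R L :
  all (fun g => (t.-1 <= size g.1) && (t.-1 <= size g.2)) gs -> disjoint_junctions gs ->
  nontrivial_windows (gaps gs ++ R) -> {in L, forall x, t < #[x]} ->
  (size (undup L) * t.+1 <= size gs)%N ->
  exists w : seq gT, perm_eq w (gaps gs ++ R ++ L) /\ nontrivial_windows w.
Proof.
move=> sizes disj win_R order_L bound.
pose cnt x := count_mem x L.
have few_unfit x : x \in undup L -> count (fun g => ~~ fits_in cnt x g) gs <= t.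
  rewrite mem_undup => L_x; have cnt_gt0 : 0 < cnt x by rewrite -has_count has_pred1.
  by rewrite /fits_in cnt_gt0 order_L //; apply: count_not_insertable (order_L x L_x) disj.
have [|os [size_os perm_os fit_os]] :=
  greedy_assignment (fits := fits_in cnt) (ys := gs) (xs := undup L).
  apply: leq_trans bound; rewrite mulnS [X in _ <= X]addnC leq_add2r.
  rewrite big_seq (leq_trans (leq_sum _ few_unfit)) // -big_seq.
  by rewrite big_const_seq count_predT iter_addn_0 mulnC.
exists (fill_gaps cnt os gs ++ R); split.
  have cnt_L : perm_eq (flatten [seq nseq (cnt x) x | x <- undup L]) L := perm_count_undup L.
  apply/seq.permP => p; move/seq.permP: (perm_fill_gaps cnt size_os) => /(_ p).
  move/seq.permP: (perm_flatten (perm_map (fun x => nseq (cnt x) x) perm_os)) => /(_ p).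
  move/seq.permP: cnt_L => /(_ p).
  by rewrite !count_cat => <- <- ->; rewrite -addnA (addnC (count p R)).
exact: (nontrivial_windows_fill (Pre := [::])) fit_os sizes win_R.
Qed.

Lemma build_gap_left U S pool n : nontrivial_windows S ->
  (n + t + t * size U <= size (undup pool))%N ->
  exists A rest, [/\ size A = n, nontrivial_windows (S ++ A),
    forall k, 0 < k < t -> k <= size A -> prodg (lastn k A) \notin U
    & perm_eq pool (A ++ rest)].
Proof.
move=> winS bound.
pose P A := nontrivial_windows (S ++ A) /\
  forall k, 0 < k < t -> k <= size A -> prodg (lastn k A) \notin U.
pose forbidden A := inv_suffix_prods (S ++ A) ++
  [seq (prodg (lastn k A))^-1 * u | k <- iota 0 t, u <- U].
have P_rcons A y : P A -> y \notin forbidden A -> P (rcons A y).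
  case=> winSA sufA; rewrite mem_cat negb_or => /andP[y_win y_U]; split.
    by rewrite -rcons_cat; apply: nontrivial_windows_rcons.
  move=> k /andP[k_gt0 kt]; rewrite size_rcons -cats1 => kA.
  rewrite lastn_catr //= subn1 prodg_cat prodg_seq1; apply: contra y_U => u_U.
  apply/allpairsP; exists (k.-1, prodg (lastn k.-1 A) * y) => /=.
  by split=> //; [rewrite mem_iota; lia | rewrite mulKg].
have size_forbidden A : (size (forbidden A) <= t + t * size U)%N.
  by rewrite size_cat size_inv_suffix_prods size_allpairs size_iota.
have P0 : P [::] by split=> [|k /andP[k_gt0 _]]; rewrite ?cats0 // leqNgt k_gt0.
have [|A [rest [size_A [winSA sufA] pool_A]]] :=
  greedy_extend P_rcons (n := n) (pool := pool) size_forbidden P0; first lia.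
by exists A, rest.
Qed.

Lemma build_gap_right U A S pool n : nontrivial_windows S ->
  (n + t + t * size U <= size (undup pool))%N ->
  exists B rest, [/\ size B = n, nontrivial_windows (S ++ B),
    forall j k, 0 < j < t -> j <= size B -> k < t ->
      prodg (take j B) * prodg (lastn k A) \notin U
    & perm_eq pool (B ++ rest)].
Proof.
move=> winS bound.
pose P B := nontrivial_windows (S ++ B) /\ forall j k, 0 < j < t -> j <= size B -> k < t ->
  prodg (take j B) * prodg (lastn k A) \notin U.
pose forbidden B := inv_suffix_prods (S ++ B) ++
  [seq (prodg B)^-1 * u * (prodg (lastn k A))^-1 | k <- iota 0 t, u <- U].
have P_rcons B y : P B -> y \notin forbidden B -> P (rcons B y).
  case=> winSB preB; rewrite mem_cat negb_or => /andP[y_win y_U]; split.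
    by rewrite -rcons_cat; apply: nontrivial_windows_rcons.
  move=> j k jt; rewrite size_rcons -cats1 => jB kt.
  have [jB' | Bj] := leqP j (size B); first by rewrite takel_cat //; apply: preB.
  rewrite take_oversize ?size_cat /=; last lia.
  rewrite prodg_cat prodg_seq1; apply: contra y_U => u_U.
  apply/allpairsP; exists (k, prodg B * y * prodg (lastn k A)) => /=.
  by split=> //; [rewrite mem_iota; lia | rewrite mulgA mulKg mulgK].
have size_forbidden B : (size (forbidden B) <= t + t * size U)%N.
  by rewrite size_cat size_inv_suffix_prods size_allpairs size_iota.
have P0 : P [::] by split=> [|j k /andP[j_gt0 _]]; rewrite ?cats0 // leqNgt j_gt0.
have [|B [rest [size_B [winSB preB] pool_B]]] :=
  greedy_extend P_rcons (n := n) (pool := pool) size_forbidden P0; first lia.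
by exists B, rest.
Qed.

Lemma build_gap U S pool : nontrivial_windows S ->
  (3 * t + t * size U <= size (undup pool))%N ->
  exists g rest, [/\ size g.1 = t, size g.2 = t, nontrivial_windows (S ++ g.1 ++ g.2),
    {in junction g, forall z, z != 1 -> z \notin U} & perm_eq pool (g.1 ++ g.2 ++ rest)].
Proof.
move=> winS bound.
have [|A [rest1 [size_A winSA sufA pool_A]]] :=
  build_gap_left (U := U) (n := t) (pool := pool) winS; first lia.
have := size_undup_perm_cat pool_A; rewrite size_A => bound1.
have [|B [rest [size_B winSAB preB rest1_B]]] :=
  build_gap_right (U := U) A (n := t) (pool := rest1) winSA; first lia.
exists (A, B), rest; split=> //=; first by rewrite catA.
  move=> _ /allpairsP[[j k] /= [jt kt ->]]; rewrite !mem_iota /= in jt kt.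
  case: j jt => [|j] jt; last by move=> _; apply: preB; lia.
  case: k kt => [|k] kt; first by rewrite take0 lastn0 prodg_nil mulg1 eqxx.
  by move=> _; rewrite take0 prodg_nil mul1g; apply: sufA; lia.
by rewrite (perm_trans pool_A) // perm_cat2l.
Qed.

Lemma build_gaps n pool : (n * (3 * t + t * (n * (t * t))) <= size (undup pool))%N ->
  exists gs rest, [/\ size gs = n, all (fun g => (size g.1 == t) && (size g.2 == t)) gs,
    nontrivial_windows (gaps gs), disjoint_junctions gs & perm_eq pool (gaps gs ++ rest)].
Proof.
elim: n => [|n IH] bound.
  by exists [::], pool; split=> // i k /andP[k_gt0 _] /=; lia.
have [|gs [rest [size_gs sizes win disj pool_gs]]] := IH.
  by apply: leq_trans bound; nia.
set U := flatten [seq junction g | g <- gs].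
have size_U : size U = (n * (t * t))%N.
  rewrite (size_flatten_map_const (c := (t * t)%N)) ?size_gs //.
  by apply/allP => g _; rewrite size_junction.
have size_gaps : size (gaps gs) = (n * (2 * t))%N.
  rewrite /gaps (size_flatten_map_const (c := (2 * t)%N)) ?size_gs //.
  by apply: sub_all sizes => g /andP[/eqP g1 /eqP g2]; rewrite size_cat g1 g2 addnn -mul2n.
have := size_undup_perm_cat pool_gs; rewrite size_gaps => bound_rest.
have [|g [rest' [size_g1 size_g2 win_g new_g rest_g]]] := build_gap (U := U) win (pool := rest).
  by rewrite size_U; nia.
exists (rcons gs g), rest'; split.
- by rewrite size_rcons size_gs.
- by rewrite all_rcons size_g1 size_g2 !eqxx.
- by rewrite gaps_rcons.
- move=> z z_ne1; rewrite -cats1 count_cat /=.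
  have [z_g | _] := boolP (z \in junction g); last by rewrite !addn0 disj.
  suff -> : count (fun g' => z \in junction g') gs = 0 by [].
  apply/eqP; rewrite -leqn0 leqNgt -has_count; apply/hasP => -[g' gs_g' z_g'].
  move/negP: (new_g z z_g z_ne1); apply.
  by apply/flattenP; exists (junction g'); rewrite ?map_f.
- by rewrite gaps_rcons -!catA (perm_trans pool_gs) // perm_cat2l.
Qed.

(* [t * t + t] gaps: each of the at most [t] leftover values is unfit for at most [t] gaps. *)
Definition sequencing_bound := let n := (t * t + t)%N in (n * (3 * t + t * (n * (t * t))))%N.

Lemma exists_nontrivial_windows_perm pool : {in pool, forall x, t < #[x]} ->
  sequencing_bound <= size (undup pool) ->
  exists w : seq gT, perm_eq w pool /\ nontrivial_windows w.
Proof.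
move=> order_pool bound.
have [gs [rest [size_gs sizes win_gs disj pool_gs]]] := build_gaps bound.
have [R [L [win_R rest_RL L_closers]]] :=
  greedy_exhaust (@nontrivial_windows_rcons) rest win_gs.
have size_L : size (undup L) <= t.
  rewrite -(size_inv_suffix_prods (gaps gs ++ R)).
  by apply: uniq_leq_size (undup_uniq _) _ => x; rewrite mem_undup; apply: L_closers.
have [|||w [perm_w win_w]] := @place_leftovers gs R L _ disj win_R.
- by apply: sub_all sizes => g /andP[/eqP-> /eqP->]; rewrite leq_pred.
- move=> x L_x; apply: order_pool.
  by rewrite (perm_mem pool_gs) mem_cat (perm_mem rest_RL) mem_cat L_x !orbT.
- by rewrite size_gs; nia.
exists w; split=> //.
by rewrite (perm_trans perm_w) // perm_sym (perm_trans pool_gs) // perm_cat2l.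
Qed.

End Windows.

Lemma nontrivial_windows_sequenceable (gT : finGroupType) t (M w : seq gT) :
  perm_eq w M -> nontrivial_windows t w -> t_weakly_sequenceable t M.
Proof.
move=> perm_w win_w; exists w; split=> // i j ij jw ji.
rewrite /psum -(subnKC (ltnW ij)) takeD big_cat /=.
have : prodg (take (j - i) (drop i w)) != 1 by apply: win_w; lia.
apply: contra => /eqP e; apply/eqP; apply: (mulgI (\prod_(x <- take i w) x)).
by rewrite /prodg mulg1 -e.
Qed.

Lemma mem_mset_of (gT : finGroupType) (a : seq gT) lam z :
  size lam = size a -> all (fun l => 0 < l) lam -> (z \in mset_of a lam) = (z \in a).
Proof.
elim: a lam => [|x a IH] [|l lam] //= [size_lam] /andP[l_gt0 lam_gt0].
by rewrite /mset_of /= mem_cat -/(mset_of a lam) IH // mem_nseq l_gt0 inE.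
Qed.

Theorem theorem2p5 :
  forall t : nat, (0 < t)%N ->
  exists Nt : nat,
    forall (gT : finGroupType) (G : {group gT}) (a : seq gT) (lam : seq nat),
      (t < pdiv #|G|)%N ->
      uniq a ->
      size lam = size a ->
      all (fun l => 0 < l)%N lam ->
      all (fun x => (x \in G) && (x != 1)) a ->
      (Nt <= size a)%N ->
      t_weakly_sequenceable t (mset_of a lam).
Proof.
(* For t = 0 every ordering qualifies; the construction does not need [0 < t]. *)
move=> t _; exists (sequencing_bound t) => gT G a lam pdiv_t uniq_a size_lam lam_gt0 a_G size_a.
have order_M : {in mset_of a lam, forall x, t < #[x]}.
  move=> x; rewrite mem_mset_of // => /(allP a_G) /andP[x_G x_ne1].
  exact: leq_trans pdiv_t (pdiv_leq_order x_G x_ne1).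
have bound_M : sequencing_bound t <= size (undup (mset_of a lam)).
  apply: leq_trans size_a (uniq_leq_size uniq_a _) => x a_x.
  by rewrite mem_undup mem_mset_of.
have [w [perm_w win_w]] := exists_nontrivial_windows_perm order_M bound_M.
exact: nontrivial_windows_sequenceable perm_w win_w.
Qed.
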